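(* Consider one group of $p'$ PEs holding locally sorted string arrays with concatenation $S'$, partitioned into $r$ buckets using character-based regular sampling with sampling factor $v>0$. Then every bucket $B^j$ contains at most $\bigl(1+\frac rv\bigr)\frac{\|S'\|}{r}+\bigl(1+\frac{v+1}{r}\bigr)p'\hat{\ell}$ characters.
   Context: $\hat{\ell}$ is the length of the longest string and $\|X\|$ the number of characters of a set of strings $X$; $r$ divides $p'$. Character-based regular sampling with factor $v$: with $\omega'=\|S'\|/(p'(v+1))$, PE $i$ (holding sorted array $S_i'$) draws $\lceil\|S_i'\|/\omega'\rceil-1$ equally spaced positions in its character array, shifts each position by at most $\hat{\ell}-1$ to the beginning of the string containing it, and takes these strings as samples; if fewer than $p'(v+1)$ samples result, the first PEs draw one additional sample each. The samples $V$ are sorted and splitters $f_j=V[j|V|/r-1]$ for $0<j<r$ are chosen, $f_0=-\infty$, $f_r=\infty$. Buckets are $B^j=\bigcup_i\{s\in S_i':f_j<s\le f_{j+1}\}$. *)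

From HB Require Import structures.
From mathcomp Require Import all_boot all_order all_algebra.
Set Implicit Arguments. Unset Strict Implicit. Unset Printing Implicit Defensive.
Import Order.TTheory GRing.Theory Num.Theory.

Section Strings.
Context {d : Order.disp_t} {T : orderType d}.

Definition str_le (s t : seq T) : bool := @Order.le _ (seqlexi T) s t.
Definition str_lt (s t : seq T) : bool := @Order.lt _ (seqlexi T) s t.

Definition chars (X : seq (seq T)) : nat := sumn (map size X).

Definition maxlen (X : seq (seq T)) : nat := \max_(s <- X) size s.

(* the string of X containing the character at position pos of the
   concatenated character array of X (i.e. position pos shifted to the
   beginning of the string containing it) *)
Fixpoint str_at (X : seq (seq T)) (pos : nat) : seq T :=
  match X with
  | [::] => [::]
  | s :: X' => if pos < size s then s else str_at X' (pos - size s)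
  end.
End Strings.

Section Sampling.
Context {d : Order.disp_t} {T : orderType d} (p' : nat) (S : 'I_p' -> seq (seq T)).

Definition concatS : seq (seq T) := flatten [seq S i | i <- enum 'I_p'].

Variable v : nat.

Definition nsamp : nat := p' * v.+1.

(* omega' = ||S'|| / (p'(v+1)).
   PE i draws ceil(||S_i'|| / omega') - 1 = ceil(||S_i'|| p'(v+1) / ||S'||) - 1
   regular samples. *)
Definition reg_count (i : 'I_p') : nat :=
  ((chars (S i) * nsamp + chars concatS - 1) %/ chars concatS).-1.

(* the k-th equally spaced position: floor(k * omega') *)
Definition reg_pos (k : nat) : nat := (k * chars concatS) %/ nsamp.

Definition reg_samples (i : 'I_p') : seq (seq T) :=
  [seq str_at (S i) (reg_pos k) | k <- iota 1 (reg_count i)].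

(* number of missing samples; the first [deficit] PEs draw one more each *)
Definition deficit : nat := nsamp - \sum_(i < p') reg_count i.

(* xpos i : the position of the additional sample drawn by PE i *)
Definition samples (xpos : 'I_p' -> nat) : seq (seq T) :=
  flatten [seq reg_samples i ++
               (if (i < deficit)%N then [:: str_at (S i) (xpos i)] else [::])
          | i <- enum 'I_p'].

Definition sortedV (xpos : 'I_p' -> nat) : seq (seq T) :=
  sort str_le (samples xpos).

Variable r : nat.

(* f_j = V[j |V| / r - 1]  (used for 0 < j < r) *)
Definition splitter (xpos : 'I_p' -> nat) (j : nat) : seq T :=
  nth [::] (sortedV xpos) (j * (size (sortedV xpos) %/ r)).-1.

(* s in B^j  iff  f_j < s <= f_{j+1}, with f_0 = -oo and f_r = +oo *)
Definition in_bucket (xpos : 'I_p' -> nat) (j : nat) (s : seq T) : bool :=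
  ((j == 0) || str_lt (splitter xpos j) s) &&
  ((j.+1 == r) || str_le s (splitter xpos j.+1)).

Definition bucket (xpos : 'I_p' -> nat) (j : nat) : seq (seq T) :=
  [seq s <- concatS | in_bucket xpos j s].
End Sampling.

From HB Require Import structures.
From mathcomp Require Import all_boot all_order all_algebra.
From mathcomp Require Import zify ring.
Import Order.TTheory GRing.Theory Num.Theory.

(* Since each local array is sorted, the characters of the strings of PE i
   lying strictly between f_j and f_(j+1) form a contiguous range of its
   character array.  The regular sample positions are omega' = ||S'||/(p'(v+1))
   apart, so a range of c characters contains at least c/omega' - 1 of them, and
   every sample drawn there lies strictly between f_j and f_(j+1).  At most
   |V|/r samples do, hence summing over the p' PEs these strings have at most
   (|V|/r + p') omega' = ||S'||/r + ||S'||/(v+1) characters.  The only other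
   string of B^j is f_(j+1) itself, which has at most \hat{l} characters because
   the strings are distinct. *)

Lemma count_multiples_window a b N K : b <= K.+1 * N ->
  b - a <= (count (fun k => a <= k * N < b) (iota 1 K)).+1 * N.
Proof.
elim: K b => [|K IH] b hb; first by rewrite mul1n; lia.
rewrite -[K.+1]addn1 iotaD count_cat /= add1n addn0.
have [hbK|hKb] := leqP b (K.+1 * N).
  by apply: leq_trans (IH b hbK) _; rewrite leq_mul2r; lia.
have hsub : count (fun k => a <= k * N < K.+1 * N) (iota 1 K) <=
            count (fun k => a <= k * N < b) (iota 1 K).
  by apply: sub_count => k /andP[-> /ltn_trans ->].
have := IH _ (leqnn (K.+1 * N)).
have [haK|hKa] := leqP a (K.+1 * N); rewrite /= ?haK ?hKb /=; nia.
Qed.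

Lemma leq_ceil_pred x N : 0 < N -> x <= ((x + N - 1) %/ N).-1.+1 * N.
Proof.
move=> hN; have := ltn_ceil (x + N - 1) hN.
by case: ((x + N - 1) %/ N) => [|q] /=; rewrite ?mulSn; lia.
Qed.

Lemma ceil_pred_lt x N : 0 < N ->
  0 < ((x + N - 1) %/ N).-1 -> ((x + N - 1) %/ N).-1 * N < x.
Proof.
move=> hN; have := leq_trunc_div (x + N - 1) N.
by case: ((x + N - 1) %/ N) => [|[|q]] //= h _; rewrite mulSn in h; lia.
Qed.

Lemma count_uniq_window [s : seq nat] [a : pred nat] [lo hi] : uniq s ->
  (forall k, k \in s -> a k -> lo <= k < hi) -> count a s <= hi - lo.
Proof.
move=> us hw; rewrite -size_filter -(size_iota lo (hi - lo)).
apply: uniq_leq_size; first exact: filter_uniq.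
by move=> k; rewrite mem_filter mem_iota => /andP[ak /hw/(_ ak)]; lia.
Qed.

Lemma convex_natP [e : pred nat] [c] :
  (forall t1 t2 t3, t1 <= t2 <= t3 -> e t1 -> e t3 -> e t2) ->
  (forall t, e t -> t < c) ->
  exists L R, [/\ L <= R <= c & e =1 (fun t => L <= t < R)].
Proof.
move=> conv bnd; have [/hasP[t0 _ et0]|/hasPn none] := boolP (has e (iota 0 c)); last first.
  exists 0, 0; split=> // t; apply/negbTE/negP => et.
  by move: (none t); rewrite mem_iota /= (bnd t et) => /(_ isT); rewrite et.
have [L eL minL] := ex_minnP (ex_intro e t0 et0).
have [R eR maxR] := ex_maxnP (ex_intro e t0 et0) (fun t et => ltnW (bnd t et)).
exists L, R.+1; split; first by rewrite (leqW (minL R eR)) bnd.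
move=> t; apply/idP/idP => [et|/andP[hLt htR]]; first by rewrite minL //= ltnS maxR.
by apply: (conv L t R) => //; rewrite hLt -ltnS.
Qed.

Section Strings.
Context {d : Order.disp_t} {T : orderType d}.
Implicit Types (X : seq (seq T)) (P : pred (seq T)).

Definition str_convex P :=
  forall s1 s2 s3, str_le s1 s2 -> str_le s2 s3 -> P s1 -> P s3 -> P s2.

Lemma str_le_refl : reflexive (@str_le _ T).
Proof. exact: (@lexx _ (seqlexi T)). Qed.

Lemma str_le_trans : transitive (@str_le _ T).
Proof. exact: (@le_trans _ (seqlexi T)). Qed.

Lemma str_le_total : total (@str_le _ T).
Proof. exact: (@le_total _ (seqlexi T)). Qed.

Lemma str_lt_le_trans [s1 s2 s3 : seq T] : str_lt s1 s2 -> str_le s2 s3 -> str_lt s1 s3.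
Proof. exact: (@lt_le_trans _ (seqlexi T)). Qed.

Lemma str_le_lt_trans [s1 s2 s3 : seq T] : str_le s1 s2 -> str_lt s2 s3 -> str_lt s1 s3.
Proof. exact: (@le_lt_trans _ (seqlexi T)). Qed.

Lemma str_lt_geF [s1 s2 : seq T] : str_lt s1 s2 -> str_le s2 s1 = false.
Proof. exact: (@lt_geF _ (seqlexi T)). Qed.

Lemma str_le_eqVlt (s1 s2 : seq T) : str_le s1 s2 = (s1 == s2) || str_lt s1 s2.
Proof. exact: (@le_eqVlt _ (seqlexi T)). Qed.

Lemma chars_cat X Y : chars (X ++ Y) = chars X + chars Y.
Proof. by rewrite /chars map_cat sumn_cat. Qed.

Lemma chars_flatten (Xs : seq (seq (seq T))) :
  chars (flatten Xs) = \sum_(X <- Xs) chars X.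
Proof. by elim: Xs => [|X Xs IH]; rewrite ?big_nil ?big_cons //= chars_cat IH. Qed.

Lemma str_at_mem X t : t < chars X -> str_at X t \in X.
Proof.
elim: X t => [|s X IH] t //= ht.
by case: ifP => hs; rewrite in_cons ?eqxx // IH ?orbT //; move: ht; rewrite /chars /=; lia.
Qed.

Lemma str_at_mono [X t1 t2] : sorted str_le X ->
  t1 <= t2 -> t2 < chars X -> str_le (str_at X t1) (str_at X t2).
Proof.
elim: X t1 t2 => [|s X IH] t1 t2 //= sX h12.
rewrite /chars /= -/(chars X) => h2.
case: ifP => h1; case: ifP => h3.
- exact: str_le_refl.
- have /allP := order_path_min str_le_trans sX; apply; apply: str_at_mem; lia.
- lia.
- by apply: IH; [exact: path_sorted sX | lia | lia].
Qed.

Lemma chars_filterE P X :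
  chars (filter P X) = count (fun t => P (str_at X t)) (iota 0 (chars X)).
Proof.
elim: X => [|s X IH] //=.
rewrite /chars /= -/(chars X) iotaD count_cat add0n -[in iota (size s) _](addn0 (size s)).
rewrite iotaDl count_map (@eq_in_count _ _ (fun=> P s)); last first.
  by move=> t; rewrite mem_iota => /andP[_ ->].
rewrite (@eq_count _ _ (fun t => P (str_at X t))); last first.
  by move=> t /=; rewrite ltnNge leq_addr addKn.
by rewrite -IH; case: (P s); rewrite ?count_predT ?count_pred0 ?size_iota.
Qed.

Lemma chars_filter_le P X : chars (filter P X) <= chars X.
Proof. by rewrite chars_filterE (leq_trans (count_size _ _)) ?size_iota. Qed.

Lemma chars_filter_predU (B P Q : pred (seq T)) X :
  {subset B <= predU P Q} ->
  chars (filter B X) <= chars (filter P X) + chars (filter Q X).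
Proof.
move=> sBPQ; rewrite !chars_filterE -count_predUI (leq_trans _ (leq_addr _ _)) //.
by apply: sub_count => t /sBPQ.
Qed.

Lemma chars_filter_pred1 X f : uniq X -> chars (filter (pred1 f) X) <= maxlen X.
Proof.
move=> uX; have [fX|fX] := boolP (f \in X).
  by rewrite (filter_pred1_uniq uX fX) /chars /= addn0 (leq_bigmax_seq _ fX).
rewrite (@eq_in_filter _ _ pred0) ?filter_pred0 // => s sX /=.
by apply: contraNF fX => /eqP <-.
Qed.

Lemma chars_filter_regular_samples [X P N n K] :
  sorted str_le X -> str_convex P -> 0 < n ->
  chars X * n <= K.+1 * N -> (0 < K -> K * N < chars X * n) ->
  chars (filter P X) * n <= (count P [seq str_at X (k * N %/ n) | k <- iota 1 K]).+1 * N.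
Proof.
move=> sX cP n_gt0 hK1 hK2; set c := chars X.
pose e t := (t < c) && P (str_at X t).
have e_convex t1 t2 t3 : t1 <= t2 <= t3 -> e t1 -> e t3 -> e t2.
  move=> /andP[h12 h23] /andP[_ P1] /andP[c3 P3].
  have c2 : t2 < c := leq_ltn_trans h23 c3.
  by rewrite /e c2 (cP _ _ _ (str_at_mono sX h12 c2) (str_at_mono sX h23 c3) P1 P3).
have e_bounded t : e t -> t < c by case/andP.
have [L [R [/andP[hLR hRc] he]]] := convex_natP e_convex e_bounded.
have chars_le : chars (filter P X) <= R - L.
  rewrite chars_filterE (@eq_in_count _ _ e); last first.
    by move=> t; rewrite mem_iota /e => /andP[_ ->].
  by apply: count_uniq_window (iota_uniq _ _) _ => t _; rewrite he.
have -> : count P [seq str_at X (k * N %/ n) | k <- iota 1 K] =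
          count (fun k => L * n <= k * N < R * n) (iota 1 K).
  rewrite count_map; apply: eq_in_count => k; rewrite mem_iota => /andP[k_gt0 kK].
  have kc : k * N %/ n < c.
    rewrite ltn_divLR //; apply: leq_ltn_trans (hK2 (leq_trans k_gt0 kK)).
    exact: leq_mul.
  by have := he (k * N %/ n); rewrite /e kc /= => ->; rewrite leq_divRL // ltn_divLR.
apply: leq_trans (leq_mul chars_le (leqnn n)) _; rewrite mulnBl.
by apply: count_multiples_window; rewrite (leq_trans _ hK1) // leq_mul2r hRc orbT.
Qed.

End Strings.

Section Splitters.
Context {d : Order.disp_t} {T : orderType d}.

(* Bucket j with the upper splitter excluded: unlike the bucket, it is convex,
   and the only ranks of V it can contain are those in [j m, (j+1) m). *)
Definition between_splitters (V : seq (seq T)) r j s :=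
  ((j == 0) || str_lt (nth [::] V (j * (size V %/ r)).-1) s) &&
  ((j.+1 == r) || str_lt s (nth [::] V (j.+1 * (size V %/ r)).-1)).

Lemma between_splitters_convex (V : seq (seq T)) r j : str_convex (between_splitters V r j).
Proof.
move=> s1 s2 s3 h12 h23 /andP[lo1 _] /andP[_ hi3]; apply/andP; split.
  by case/orP: lo1 => [->|lo1] //; rewrite (str_lt_le_trans lo1 h12) orbT.
by case/orP: hi3 => [->|hi3] //; rewrite (str_le_lt_trans h23 hi3) orbT.
Qed.

Lemma count_between_splitters (V : seq (seq T)) r j : sorted str_le V -> r %| size V -> j < r ->
  count (between_splitters V r j) V <= size V %/ r.
Proof.
move=> sV r_dvd j_lt; set m := size V %/ r.
have sizeV : size V = r * m by rewrite mulnC divnK.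
have V_le := sorted_leq_nth str_le_trans str_le_refl [::] sV.
rewrite -[V in count _ V](mkseq_nth [::]) count_map.
have -> : m = j.+1 * m - j * m by rewrite mulSn addnK.
apply: count_uniq_window (iota_uniq _ _) _ => k; rewrite mem_iota add0n => /andP[_ kV].
case/andP=> [lo hi]; apply/andP; split.
  case: eqP lo => [-> _|_ /= lo]; first by rewrite mul0n.
  have jm_le : j * m <= size V by rewrite sizeV leq_mul2r ltnW ?orbT.
  rewrite leqNgt; apply/negP => k_lt; move/str_lt_geF: lo; rewrite V_le ?inE //; lia.
case: eqP hi => [jr _|_ /= hi]; first by rewrite jr -sizeV.
rewrite ltnNge; apply/negP => k_ge; move/str_lt_geF: hi; rewrite V_le ?inE //; lia.
Qed.

End Splitters.

Lemma sum_enum_ord p (F : 'I_p -> nat) : \sum_(i <- enum 'I_p) F i = \sum_(i < p) F i.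
Proof. by rewrite big_enum. Qed.

Lemma sum_ord_ltn p D : \sum_(i < p) (i < D) = minn D p.
Proof. by elim: p => [|p IH]; rewrite ?big_ord0 ?big_ord_recr /= ?IH; lia. Qed.

Section RegularSampling.
Context {d : Order.disp_t} {T : orderType d} (p' : nat) (S : 'I_p' -> seq (seq T)) (v : nat).

Let N := chars (concatS S).
Let n := nsamp p' v.

Lemma chars_concatS : N = \sum_(i < p') chars (S i).
Proof. by rewrite /N /concatS chars_flatten big_map sum_enum_ord. Qed.

Hypothesis N_gt0 : 0 < N.

Lemma nsamp_gt0 : 0 < n.
Proof.
rewrite /n /nsamp muln_gt0 andbT lt0n; apply/eqP => p0; move: N_gt0.
by rewrite chars_concatS big1 // => i; move: (ltn_ord i); rewrite {2}p0.
Qed.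

Lemma reg_count_ceil i : chars (S i) * n <= (reg_count S v i).+1 * N.
Proof. exact: leq_ceil_pred. Qed.

Lemma reg_count_lt i : 0 < reg_count S v i -> reg_count S v i * N < chars (S i) * n.
Proof. exact: ceil_pred_lt. Qed.

Lemma reg_count_le i : reg_count S v i * N <= chars (S i) * n.
Proof. by case: (posnP (reg_count S v i)) => [->|/reg_count_lt/ltnW]. Qed.

Lemma sum_reg_count_le : \sum_(i < p') reg_count S v i <= n.
Proof.
rewrite -(leq_pmul2r N_gt0) big_distrl /= (leq_trans (leq_sum _ (fun i _ => reg_count_le i))) //.
by rewrite -big_distrl /= -chars_concatS mulnC.
Qed.

Lemma sum_reg_count_ge : n <= \sum_(i < p') reg_count S v i + p'.
Proof.
rewrite -(leq_pmul2r N_gt0) {1}chars_concatS mulnC big_distrl /=.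
rewrite (leq_trans (leq_sum _ (fun i _ => reg_count_ceil i))) // -big_distrl /= leq_mul2r.
by rewrite (eq_bigr _ (fun i _ => esym (addn1 _))) big_split /= sum1_card card_ord leqnn orbT.
Qed.

Lemma size_sortedV xpos : size (sortedV S v xpos) = n.
Proof.
rewrite size_sort /samples size_flatten /shape sumnE big_map big_map sum_enum_ord.
have size_if b (s : seq T) : size (if b then [:: s] else [::]) = b by case: b.
under eq_bigr => i _ do rewrite size_cat size_map size_iota size_if.
rewrite big_split /=.
have := sum_reg_count_le; have := sum_reg_count_ge.
by rewrite sum_ord_ltn /deficit -/n; move: (\sum_(i < p') _) => SR; lia.
Qed.

Lemma count_reg_samples_le P xpos :
  \sum_(i < p') count P (reg_samples S v i) <= count P (sortedV S v xpos).
Proof.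
rewrite (permP (permEl (perm_sort _ _))) /samples count_flatten sumnE big_map big_map sum_enum_ord.
by apply: leq_sum => i _; rewrite count_cat leq_addr.
Qed.

Variables (r : nat) (xpos : 'I_p' -> nat) (j : nat).
Hypotheses (S_sorted : forall i, sorted str_le (S i)) (r_dvd : r %| p') (j_lt : j < r).

Lemma chars_between_splitters :
  chars (filter (between_splitters (sortedV S v xpos) r j) (concatS S)) * n <= (n %/ r + p') * N.
Proof.
have P_convex := between_splitters_convex (sortedV S v xpos) r j.
rewrite /concatS filter_flatten chars_flatten big_map big_map sum_enum_ord big_distrl /=.
rewrite (leq_trans (leq_sum _ (fun i _ => chars_filter_regular_samples (S_sorted i)
           P_convex nsamp_gt0 (reg_count_ceil i) (@reg_count_lt i)))) //.
rewrite -big_distrl /= leq_mul2r; apply/orP; right.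
rewrite (eq_bigr _ (fun i _ => esym (addn1 _))) big_split /= sum1_card card_ord leq_add2r.
apply: leq_trans (count_reg_samples_le _ xpos) _.
rewrite -(size_sortedV xpos) count_between_splitters //.
  exact: (sort_sorted str_le_total).
by rewrite size_sortedV; apply: dvdn_mulr.
Qed.

Lemma in_bucket_split s : in_bucket S v r xpos j s ->
  between_splitters (sortedV S v xpos) r j s || (s == splitter S v r xpos j.+1).
Proof.
case/andP=> lo hi; rewrite /between_splitters -/(splitter S v r xpos j) lo /=.
rewrite -/(splitter S v r xpos j.+1); case/orP: hi => [-> // |].
by rewrite str_le_eqVlt => /orP[] ->; rewrite ?orbT.
Qed.

Lemma chars_bucket_le : uniq (concatS S) ->
  chars (bucket S v r xpos j) <=
  chars (filter (between_splitters (sortedV S v xpos) r j) (concatS S)) + maxlen (concatS S).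
Proof.
move=> S_uniq; apply: leq_trans (chars_filter_predU _ _ _ _ in_bucket_split) _.
by rewrite leq_add2l chars_filter_pred1.
Qed.

End RegularSampling.

Section BoundArithmetic.
Local Open Scope ring_scope.

Lemma bucket_bound_arith (B O N l p' r v : nat) :
  (0 < r)%N -> (r %| p')%N -> (0 < v)%N -> (0 < p')%N ->
  (O * (p' * v.+1) <= (p' * v.+1 %/ r + p') * N)%N -> (B <= O + l)%N ->
  B%:R <= (1 + r%:R / v%:R) * N%:R / r%:R + (1 + v.+1%:R / r%:R) * p'%:R * l%:R :> rat.
Proof.
move=> r_gt0 /dvdnP[q p_eq] v_gt0 p_gt0 hO hB.
have hO' : (O * r * v <= (v + r) * N)%N.
  have q_gt0 : (0 < q)%N by move: p_gt0; rewrite p_eq muln_gt0 => /andP[].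
  move: hO; rewrite p_eq mulnAC mulnK // => hO.
  have : (q * (O * r * v.+1) <= q * ((v.+1 + r) * N))%N by lia.
  by rewrite leq_pmul2l // => ?; nia.
apply: (@le_trans _ _ (O%:R + l%:R)); first by rewrite -natrD ler_nat.
apply: lerD.
  have -> : (1 + r%:R / v%:R) * N%:R / r%:R = ((v + r) * N)%:R / (r * v)%:R :> rat.
    by rewrite natrM !natrD natrM; field; rewrite !pnatr_eq0 -!lt0n r_gt0 v_gt0.
  by rewrite ler_pdivlMr ?ltr0n ?muln_gt0 ?r_gt0 // -natrM ler_nat mulnA.
apply: ler_peMl => //; apply: mulr_ege1; last by rewrite ler1n.
by rewrite lerDl divr_ge0.
Qed.

End BoundArithmetic.

Theorem theorem18 (d : Order.disp_t) (T : orderType d) (p' : nat)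
  (S : 'I_p' -> seq (seq T)) (r v : nat) (xpos : 'I_p' -> nat) :
  (0 < r)%N -> (r %| p')%N -> (0 < v)%N ->
  (forall i : 'I_p', sorted str_le (S i)) ->
  uniq (concatS S) ->
  (forall i : 'I_p', (i < deficit S v)%N -> (xpos i < chars (S i))%N) ->
  forall j : 'I_r,
    ((chars (bucket S v r xpos j))%:R <=
       (1 + r%:R / v%:R) * (chars (concatS S))%:R / r%:R
       + (1 + (v.+1)%:R / r%:R) * p'%:R * (maxlen (concatS S))%:R :> rat)%R.
Proof.
(* The additional samples only add to the sample counts, so where they are drawn
   is irrelevant. *)
move=> r_gt0 r_dvd v_gt0 S_sorted S_uniq _ j.
have [N0|N_gt0] := posnP (chars (concatS S)).
  have -> : chars (bucket S v r xpos j) = 0.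
    by apply/eqP; rewrite -leqn0 -N0 chars_filter_le.
  by rewrite N0 mulr0 mul0r add0r !mulr_ge0 ?addr_ge0 ?divr_ge0.
have p_gt0 : 0 < p'.
  by have := nsamp_gt0 _ _ v N_gt0; rewrite /nsamp muln_gt0 => /andP[].
apply: bucket_bound_arith => //; last exact: chars_bucket_le.
exact: chars_between_splitters.
Qed.
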